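(* For all $n\ge0$, $0\le k\le n$ and complex $a,b,c_0,c_\infty$, $$b^kk!\,E_{n,k}(a,b;c_0,c_\infty)=\sum_{j=0}^k(-1)^{k-j}\binom kj(bn+c_0+c_\infty)^{\underline{k-j},b}(c_0+c_\infty)^{\overline j,b}(bj+c_0)^{\underline n,a},$$ $$(c_0+c_\infty)^{\overline k,b}\,(bk+c_0)^{\underline n,a}=\sum_{j=0}^k\binom kj(bn+c_0+c_\infty)^{\overline{k-j},b}\,b^jj!\,E_{n,j}(a,b;c_0,c_\infty).$$
   Context: GKP triangle $\left[\begin{array}{cc|c}\alpha,&\beta&\gamma\\ \alpha',&\beta'&\gamma'\end{array}\right]_{n,k}$: defined by $T_{0,0}=1$, $T_{n,k}=0$ if $n<0$, $k<0$ or $k>n$, and $T_{n+1,k+1}=[\alpha n+\beta(k+1)+\gamma]T_{n,k+1}+[\alpha' n+\beta' k+\gamma']T_{n,k}$ for $n\ge0$, $k\in\mathbb Z$. Generalized Eulerian numbers: $E_{n,k}(a,b;c_0,c_\infty):=\left[\begin{array}{cc|c}-a,&b&c_0\\ a+b,&-b&c_\infty\end{array}\right]_{n,k}$. $(x)^{\overline n,b}=\prod_{i=0}^{n-1}(x+ib)$, $(x)^{\underline n,b}=\prod_{i=0}^{n-1}(x-ib)$. *)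

From HB Require Import structures.
From mathcomp Require Import all_boot all_order all_algebra.
From mathcomp Require Import reals.
From mathcomp.real_closed Require Export complex.
Set Implicit Arguments. Unset Strict Implicit. Unset Printing Implicit Defensive.
Import Order.TTheory GRing.Theory Num.Theory.
Local Open Scope ring_scope.

(* Indices k are natural numbers; the values T_{n,k} with k < 0 are 0 by
   definition, so the recurrence at k+1 = 0 reads T_{n+1,0} = (alpha n + gamma) T_{n,0}. *)
Fixpoint gkp (F : comRingType) (al be ga al' be' ga' : F) (n : nat) : nat -> F :=
  match n with
  | 0 => fun k => if k == 0%N then 1 else 0
  | m.+1 => fun k =>
      match k with
      | 0 => (al * m%:R + ga) * gkp al be ga al' be' ga' m 0
      | j.+1 => (al * m%:R + be * j.+1%:R + ga) * gkp al be ga al' be' ga' m j.+1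
              + (al' * m%:R + be' * j%:R + ga') * gkp al be ga al' be' ga' m j
      end
  end.

Definition genEuler (F : comRingType) (a b c0 cinf : F) (n k : nat) : F :=
  gkp (- a) b c0 (a + b) (- b) cinf n k.

Definition risef (F : comRingType) (x b : F) (n : nat) : F :=
  \prod_(i < n) (x + i%:R * b).

Definition fallf (F : comRingType) (x b : F) (n : nat) : F :=
  \prod_(i < n) (x - i%:R * b).

From HB Require Import structures.
From mathcomp Require Import all_boot all_order all_algebra.
From mathcomp Require Import reals.
From mathcomp.real_closed Require Import complex.
From mathcomp Require Import ring.
Import Order.TTheory GRing.Theory Num.Theory.
Local Open Scope ring_scope.

(* Both identities hold over any commutative ring and are proved by induction
   on n, using the GKP recurrence of the scaled Eulerian numbers
     e_{n,k} := b^k k! E_{n,k}(a,b;c0,cinf),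
   which reads  e_{n+1,k} = (-a n + b k + c0) e_{n,k}
                          + b k ((a+b) n - b (k-1) + cinf) e_{n,k-1}.
   - First we collect the algebra of the step-b rising and falling factorials:
     one-step unfoldings, the reflection (-1)^m (x)^{falling m} = (-x)^{rising m},
     the Vandermonde convolution for rising factorials, and the resulting
     orthogonality relation, which gives the base case n = 0 of the explicit
     formula.
   - The second identity (expansion of (c0+cinf)^{rising k}(bk+c0)^{falling n}
     in the e_{n,j}) follows by induction on n for all k at once; the inductive
     step reduces, term by term, to a polynomial identity between rising
     factorials (risef_step_identity).
   - The first identity (explicit formula for e_{n,k}) is proved likewise by
     induction on n, for all k at once, comparing the sums term by term. *)

Section Factorials.
Context {F : comRingType}.
Implicit Types x z b : F.

Lemma risef0 x b : risef x b 0 = 1.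
Proof. by rewrite /risef big_ord0. Qed.

Lemma fallf0 x b : fallf x b 0 = 1.
Proof. by rewrite /fallf big_ord0. Qed.

Lemma risefS x b m : risef x b m.+1 = x * risef (x + b) b m.
Proof.
rewrite /risef big_ord_recl /= mul0r addr0; congr (_ * _).
by apply: eq_bigr => i _; rewrite /bump /=; ring.
Qed.

Lemma fallfS x b m : fallf x b m.+1 = x * fallf (x - b) b m.
Proof.
rewrite /fallf big_ord_recl /= mul0r subr0; congr (_ * _).
by apply: eq_bigr => i _; rewrite /bump /=; ring.
Qed.

Lemma risefSr x b m : risef x b m.+1 = risef x b m * (x + m%:R * b).
Proof. by rewrite /risef big_ord_recr. Qed.

Lemma fallfSr x b m : fallf x b m.+1 = fallf x b m * (x - m%:R * b).
Proof. by rewrite /fallf big_ord_recr. Qed.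

Lemma fallf_risef x b m : (-1) ^+ m * fallf x b m = risef (- x) b m.
Proof.
elim: m x => [|m IH] x; first by rewrite expr0 mul1r fallf0 risef0.
rewrite fallfS risefS exprS (_ : - x + b = - (x - b)); last ring.
by rewrite -IH; ring.
Qed.

Lemma risef_at0 b k : risef 0 b k = (k == 0%N)%:R.
Proof. by case: k => [|k]; rewrite ?risef0 // risefS mul0r. Qed.

(* From here on the products are handled only through the lemmas above;
   keeping them folded stops [ring] from expanding the big products. *)
Local Opaque risef fallf.

(* Vandermonde convolution for step-b rising factorials; induction on k,
   splitting (x+z) = x + z in the first factor and the binomial by Pascal. *)
Lemma risef_vandermonde b k x z :
  \sum_(j < k.+1) 'C(k, j)%:R * risef x b j * risef z b (k - j)
  = risef (x + z) b k.
Proof.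
elim: k x z => [|k IH] x z.
  by rewrite big_ord_recl big_ord0 /= !risef0 bin0 mulr1 mul1r addr0.
have split_x_z : (x + z) * risef (x + z + b) b k
    = x * risef ((x + b) + z) b k + z * risef (x + (z + b)) b k.
  rewrite (_ : x + b + z = x + z + b); last ring.
  by rewrite (_ : x + (z + b) = x + z + b); [ring | ring].
rewrite risefS split_x_z -!IH !big_distrr /= big_ord_recl /= bin0 subn0.
under eq_bigr => i _ do rewrite /bump /= add1n binS natrD subSS !mulrDl.
rewrite big_split /=.
have shift_x : \sum_(i < k.+1) 'C(k, i)%:R * risef x b (i.+1)
                                 * risef z b (k - i)
    = \sum_(i < k.+1) x * ('C(k, i)%:R * risef (x + b) b i * risef z b (k - i)).
  by apply: eq_bigr => i _; rewrite risefS; ring.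
rewrite -shift_x.
rewrite [X in _ = _ + X](_ : _ = \sum_(j < k.+1)
    'C(k, j)%:R * risef x b j * risef z b (k.+1 - j)); last first.
  apply: eq_bigr => i _; rewrite subSn; last by rewrite -ltnS ltn_ord.
  by rewrite (risefS z); ring.
rewrite [X in _ + X = _]addrC addrCA; congr (_ + _).
rewrite [RHS]big_ord_recl /= subn0 bin0 [X in _ + X = _]big_ord_recr /=.
(* The remaining sums agree up to the reindexing i.+1 = bump 0 i. *)
by rewrite bin_small // !mul0r addr0.
Qed.

(* Orthogonality: Vandermonde at z = -x, via the reflection formula. *)
Lemma risef_fallf_orthogonality c b k :
  \sum_(j < k.+1) (-1) ^+ (k - j) * 'C(k, j)%:R * fallf c b (k - j)
                   * risef c b j
  = (k == 0%N)%:R.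
Proof.
have := risef_vandermonde b k c (- c); rewrite addrN risef_at0 => <-.
by apply: eq_bigr => j _; rewrite -fallf_risef; ring.
Qed.

End Factorials.

Lemma sum_pred_shift (F : comRingType) k (w X : nat -> F) : w k.+1 = 0 ->
  \sum_(j < k.+1) w j * (match (j : nat) with 0 => 0 | i.+1 => X i end)
  = \sum_(i < k.+1) w i.+1 * X i.
Proof.
move=> wk0; rewrite big_ord_recl mulr0 add0r [RHS]big_ord_recr /= wk0.
by rewrite mul0r addr0; apply: eq_bigr => i _; rewrite /bump /= add1n.
Qed.

Section ScaledEuler.
Variables (F : comRingType) (a b c0 cinf : F).

Definition scaledEuler n k := b ^+ k * k`!%:R * genEuler a b c0 cinf n k.

Lemma scaledEuler0 k : scaledEuler 0 k = (k == 0%N)%:R.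
Proof.
by case: k => [|k]; rewrite /scaledEuler /genEuler /= ?mulr0 // expr0 mul1r mulr1.
Qed.

Lemma scaledEulerS n k :
  scaledEuler n.+1 k = (- a * n%:R + b * k%:R + c0) * scaledEuler n k
  + match k with
    | 0 => 0
    | i.+1 => b * i.+1%:R * ((a + b) * n%:R - b * i%:R + cinf) * scaledEuler n i
    end.
Proof.
case: k => [|i]; rewrite /scaledEuler /genEuler /=.
  by rewrite expr0 fact0 mulr0 !addr0; ring.
rewrite -/(genEuler a b c0 cinf n i.+1) -/(genEuler a b c0 cinf n i).
move: (genEuler a b c0 cinf n i.+1) (genEuler a b c0 cinf n i) => E1 E0.
by rewrite factS natrM exprS; ring.
Qed.

Local Opaque risef fallf genEuler.

Lemma shift_base n : b * n.+1%:R + c0 + cinf = b * n%:R + c0 + cinf + b.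
Proof. by rewrite -addn1 natrD; ring. Qed.

(* The polynomial identity behind the inductive step of the expansion:
   with y = b n + c0 + cinf, the factor (b(j+m) + c0 - a n) distributes over
   y^{rising m} into the two GKP coefficients. *)
Lemma risef_step_identity n j m :
  (b * (j + m)%:R + c0 - n%:R * a) * risef (b * n%:R + c0 + cinf) b m
  = risef (b * n%:R + c0 + cinf + b) b m * (- a * n%:R + b * j%:R + c0)
    + m%:R * b * risef (b * n%:R + c0 + cinf + b) b m.-1
      * ((a + b) * n%:R - b * j%:R + cinf).
Proof.
case: m => [|m]; first by rewrite !risef0; ring.
rewrite risefS risefSr /=; move: (risef _ _ m) => X; ring.
Qed.

Lemma risef_fallf_expansion n k :
  risef (c0 + cinf) b k * fallf (b * k%:R + c0) a n =
  \sum_(j < k.+1) 'C(k, j)%:R * risef (b * n%:R + c0 + cinf) b (k - j)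
                  * scaledEuler n j.
Proof.
elim: n k => [|n IH] k.
  rewrite big_ord_recl big1 ?addr0; last by move=> i _; rewrite scaledEuler0 mulr0.
  by rewrite fallf0 scaledEuler0 mulr0 add0r subn0 bin0 !mulr1 mul1r.
under eq_bigr => j _ do rewrite scaledEulerS mulrDr.
rewrite big_split /= (@sum_pred_shift _ k
  (fun j => 'C(k, j)%:R * risef (b * n.+1%:R + c0 + cinf) b (k - j))
  (fun i => b * i.+1%:R * ((a + b) * n%:R - b * i%:R + cinf) * scaledEuler n i));
  last by rewrite bin_small // mul0r.
rewrite fallfSr mulrA IH big_distrl -big_split /=.
apply: eq_bigr => -[j /= /[!ltnS] le_jk] _.
rewrite shift_base -(subnKC le_jk) addKn subnS addKn.
move: (k - j)%N => m.
have absorb : 'C(j + m, j.+1)%:R * j.+1%:R = m%:R * 'C(j + m, j)%:R :> F.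
  by rewrite -!natrM mulnC mul_bin_left addKn.
have step := risef_step_identity n j m.
move: (b * n%:R + c0 + cinf) step => y step.
rewrite [X in _ = _ + X](_ : _ = ('C(j + m, j.+1)%:R * j.+1%:R)
   * (b * risef (y + b) b m.-1 * ((a + b) * n%:R - b * j%:R + cinf)
      * scaledEuler n j)); last ring.
rewrite absorb (_ : _ * _ * _ * _ = 'C(j + m, j)%:R * scaledEuler n j
   * ((b * (j + m)%:R + c0 - n%:R * a) * risef y b m)); last ring.
by rewrite step; ring.
Qed.

Lemma scaledEuler_explicit n k :
  scaledEuler n k =
  \sum_(j < k.+1) (-1) ^+ (k - j) * 'C(k, j)%:R
       * fallf (b * n%:R + c0 + cinf) b (k - j)
       * risef (c0 + cinf) b j
       * fallf (b * j%:R + c0) a n.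
Proof.
elim: n k => [|n IH] k.
  rewrite scaledEuler0 -(risef_fallf_orthogonality (c0 + cinf) b k).
  by apply: eq_bigr => j _; rewrite fallf0 mulr1 mulr0 add0r.
rewrite shift_base.
case: k => [|p].
  rewrite scaledEulerS addr0 IH !big_ord_recl !big_ord0 /= !addr0 fallfSr !fallf0.
  by move: (risef _ _ _) (fallf _ _ _) => X Y; ring.
(* The sum for e_{n,p} is extended by a vanishing top term. *)
have IHp := IH p; rewrite [RHS](_ : _ = \sum_(j < p.+2)
    (-1) ^+ (p - j) * 'C(p, j)%:R * fallf (b * n%:R + c0 + cinf) b (p - j)
    * risef (c0 + cinf) b j * fallf (b * j%:R + c0) a n) in IHp; last first.
  by rewrite [RHS]big_ord_recr /= bin_small // mulr0 !mul0r addr0.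
rewrite scaledEulerS (IH p.+1) IHp !big_distrr -big_split /=.
apply: eq_bigr => -[j /=]; rewrite ltnS leq_eqVlt => /orP[/eqP -> _| lt_jp _].
  rewrite subnn (_ : (p - p.+1 = 0)%N); last by apply/eqP; rewrite subn_eq0.
  rewrite (bin_small (ltnSn p)) binn fallfSr !fallf0.
  by move: (risef _ _ _) (fallf _ _ _) => X Y; ring.
rewrite ltnS in lt_jp; rewrite -(subnKC lt_jp) -addnS !addKn.
move: (p - j)%N => q.
have absorb : (j + q.+1)%:R * 'C(j + q, j)%:R = q.+1%:R * 'C(j + q.+1, j)%:R :> F.
  by rewrite -!natrM addnS mul_bin_down subSn ?leq_addr // addKn.
rewrite (fallfSr (b * j%:R + c0)) (fallfSr (b * n%:R + c0 + cinf)) fallfS.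
rewrite addrK exprS.
move: (fallf (b * n%:R + c0 + cinf) b q) (fallf (b * j%:R + c0) a n)
      (risef (c0 + cinf) b j) => G f r.
rewrite [X in _ + X = _](_ : _ = ((j + q.+1)%:R * 'C(j + q, j)%:R)
   * (b * ((a + b) * n%:R - b * (j + q)%:R + cinf) * (-1) ^+ q * G * r * f));
  last ring.
by rewrite absorb; ring.
Qed.

End ScaledEuler.

Theorem mainTheorem11 (R : realType) (n k : nat) (a b c0 cinf : R[i]) :
  (k <= n)%N ->
  b ^+ k * k`!%:R * genEuler a b c0 cinf n k =
    \sum_(j < k.+1) (-1) ^+ (k - j) * 'C(k, j)%:R
       * fallf (b * n%:R + c0 + cinf) b (k - j)
       * risef (c0 + cinf) b j
       * fallf (b * j%:R + c0) a n
  /\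
  risef (c0 + cinf) b k * fallf (b * k%:R + c0) a n =
    \sum_(j < k.+1) 'C(k, j)%:R
       * risef (b * n%:R + c0 + cinf) b (k - j)
       * (b ^+ j * j`!%:R * genEuler a b c0 cinf n j).
Proof.
move=> _; split.
- exact: scaledEuler_explicit.
- exact: risef_fallf_expansion.
Qed.
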